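(* Let $X$ be a robust $X$-set parameter and let $G$ and $G'$ be graphs such that $\mathfrak{X}(G)\cong\mathfrak{X}(G')$. If $X(K_1)=0$, or if $G$ and $G'$ both have no isolated vertices, then $|V(G)|=|V(G')|$ and there is a relabeling of the vertices of $G'$ (i.e., a bijection $\psi:V(G)\to V(G')$) such that for every $S\subseteq V(G)$, $S$ is an $X$-set of $G$ if and only if $\psi(S)$ is an $X$-set of $G'$.
   Context: All graphs are finite, simple, undirected, with nonempty vertex set. A super $X$-set parameter $X$ assigns to each graph $G$ a family of subsets of $V(G)$, called the $X$-sets of $G$, such that: every graph isomorphism $V(G)\to V(G')$ maps $X$-sets of $G$ to $X$-sets of $G'$; every graph has at least one $X$-set; and (Superset) if $S$ is an $X$-set of $G$ and $S\subseteq S'\subseteq V(G)$, then $S'$ is an $X$-set of $G$. The number $X(G)$ is the minimum cardinality of an $X$-set of $G$. A robust $X$-set parameter is a super $X$-set parameter that additionally satisfies: ($(n-1)$-set) if $G$ is connected of order $n\ge 2$, every set of $n-1$ vertices of $G$ is an $X$-set; (Component consistency) if $G_1,\dots,G_k$ are the connected components of $G$, then $S\subseteq V(G)$ is an $X$-set of $G$ if and only if $S\cap V(G_i)$ is an $X$-set of $G_i$ for every $i$. The $X$-TAR graph $\mathfrak{X}(G)$ has as vertices the $X$-sets of $G$, with $S_1S_2$ an edge iff $|S_1\ominus S_2|=1$ ($\ominus$ = symmetric difference). $K_1$ is the one-vertex graph. *)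

From HB Require Import structures.
From mathcomp Require Import all_boot.
Set Implicit Arguments. Unset Strict Implicit. Unset Printing Implicit Defensive.

Definition is_graph (T : finType) (e : rel T) : Prop :=
  [/\ symmetric e, irreflexive e & 0 < #|T|].

(* A set parameter: X T e S  <=>  S is an X-set of the graph (T, e). *)
Definition set_param := forall (T : finType), rel T -> {set T} -> bool.

Definition graph_iso (T T' : finType) (e : rel T) (e' : rel T') (f : T -> T') :=
  bijective f /\ forall x y, e' (f x) (f y) = e x y.

Definition super_param (X : set_param) : Prop :=
  [/\
      forall (T T' : finType) (e : rel T) (e' : rel T') (f : T -> T'),
        is_graph e -> is_graph e' -> graph_iso e e' f ->
        forall S : {set T}, X T e S -> X T' e' (f @: S),
      forall (T : finType) (e : rel T), is_graph e -> exists S, X T e S &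
      forall (T : finType) (e : rel T), is_graph e ->
        forall S S' : {set T}, S \subset S' -> X T e S -> X T e S'].

Definition connected_graph (T : finType) (e : rel T) : Prop :=
  forall x y, connect e x y.

Definition comp_type (T : finType) (e : rel T) (x : T) : finType :=
  {y : T | connect e x y}.
Definition comp_rel (T : finType) (e : rel T) (x : T) : rel (comp_type e x) :=
  fun u v => e (val u) (val v).
Definition comp_trace (T : finType) (e : rel T) (x : T) (S : {set T})
  : {set comp_type e x} := [set u | val u \in S].

Definition robust_param (X : set_param) : Prop :=
  [/\ super_param X,
      forall (T : finType) (e : rel T), is_graph e -> connected_graph e ->
        2 <= #|T| -> forall S : {set T}, #|S| = #|T| - 1 -> X T e S &
      (* component consistency: the components are the induced subgraphs on
         the classes of connect e *)
      forall (T : finType) (e : rel T), is_graph e -> forall S : {set T},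
        X T e S <-> (forall x : T, X (comp_type e x) (@comp_rel T e x) (comp_trace e x S))].

(* X(G) = k : k is the minimum cardinality of an X-set of G. *)
Definition param_value (X : set_param) (T : finType) (e : rel T) (k : nat) : Prop :=
  (exists S : {set T}, X T e S /\ #|S| = k) /\ (forall S : {set T}, X T e S -> k <= #|S|).

Definition K1_rel : rel unit := fun _ _ => false.

(* The X-TAR graph: vertices are the X-sets, adjacency is |S1 (+) S2| = 1. *)
Definition tar_type (X : set_param) (T : finType) (e : rel T) : finType :=
  {S : {set T} | X T e S}.
Definition tar_rel (X : set_param) (T : finType) (e : rel T) : rel (tar_type X e) :=
  fun A B => #|(val A :\: val B) :|: (val B :\: val A)| == 1.

Definition tar_isomorphic (X : set_param) (T T' : finType) (e : rel T) (e' : rel T') : Prop :=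
  exists f : tar_type X e -> tar_type X e', graph_iso (@tar_rel X T e) (@tar_rel X T' e') f.

Definition no_isolated (T : finType) (e : rel T) : Prop := forall x, exists y, e x y.

(* X-sets are closed upwards, so in the TAR graph the distance between two
   X-sets is the size of their symmetric difference, and a TAR isomorphism f
   preserves it.  Under either hypothesis every co-singleton V - {i} is an
   X-set; these are the TAR neighbours of V, so f sends them to the sets
   W + {pi i} (symmetric difference) with W = f(V), for an injective pi.
   Comparing the distances of f(S) to f(V) and f(V - {i}) shows that
   pi i lies in f(S) iff (i in S) xor (pi i not in W).  Injections both ways
   give |V(G)| = |V(G')|; then padding S with pi^-1(V(G') - W), which keeps
   it an X-set, yields an X-set of G' contained in pi(S), and symmetrically. *)
From mathcomp Require Import all_boot zify.
Set Implicit Arguments. Unset Strict Implicit. Unset Printing Implicit Defensive.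

Section SymDiff.
Variable T : finType.
Implicit Types (A B C : {set T}) (x : T).

Definition symdiff A B := (A :\: B) :|: (B :\: A).

Lemma in_symdiff A B x : (x \in symdiff A B) = (x \in A) (+) (x \in B).
Proof. by rewrite !inE; case: (x \in A); case: (x \in B). Qed.

Lemma symdiffC A B : symdiff A B = symdiff B A.
Proof. by apply/setP=> x; rewrite !in_symdiff addbC. Qed.

Lemma symdiffA A B C : symdiff A (symdiff B C) = symdiff (symdiff A B) C.
Proof. by apply/setP=> x; rewrite !in_symdiff addbA. Qed.

Lemma symdiffKr A B : symdiff (symdiff A B) B = A.
Proof. by apply/setP=> x; rewrite !in_symdiff -addbA addbb addbF. Qed.

Lemma symdiffvv A : symdiff A A = set0.
Proof. by apply/setP=> x; rewrite in_symdiff addbb inE. Qed.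

Lemma card_symdiff_le A B C :
  #|symdiff A C| <= #|symdiff A B| + #|symdiff B C|.
Proof.
apply: leq_trans (leq_card_setU _ _); apply: subset_leq_card.
by apply/subsetP=> x; rewrite !(in_symdiff, inE); case: (x \in A); case: (x \in B).
Qed.

Lemma symdiff1_mem A x : x \in A -> symdiff A [set x] = A :\ x.
Proof.
move=> Ax; apply/setP=> y; rewrite in_symdiff !inE.
by case: eqP => [->|]; rewrite ?Ax ?addbF.
Qed.

Lemma symdiff1_notin A x : x \notin A -> symdiff A [set x] = x |: A.
Proof.
move=> /negPf Ax; apply/setP=> y; rewrite in_symdiff !inE.
by case: eqP => [->|]; rewrite ?Ax ?addbF ?orbF.
Qed.

Lemma card_symdiff1 A x :
  #|symdiff A [set x]| = if x \in A then #|A|.-1 else #|A|.+1.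
Proof.
case: ifPn => Ax; first by rewrite symdiff1_mem // (cardsD1 x A) Ax.
by rewrite symdiff1_notin // cardsU1 Ax.
Qed.

Lemma setTD1_symdiff x : setT :\ x = symdiff setT [set x].
Proof. by apply/setP=> y; rewrite in_symdiff !inE; case: eqP. Qed.

End SymDiff.

Definition upward_closed (T : finType) (F : pred {set T}) :=
  forall A B : {set T}, A \subset B -> F A -> F B.

Definition sd_rel (T : finType) (F : pred {set T}) : rel {S | F S} :=
  fun A B => #|symdiff (val A) (val B)| == 1.

Lemma upward_closed_step (T : finType) (F : pred {set T}) (A B : {set T}) :
  upward_closed F -> F A -> F B -> A != B ->
  exists2 x, x \in symdiff A B & F (symdiff B [set x]).
Proof.
move=> upF FA FB neqAB.
case: (boolP [exists x, (x \in A) && (x \notin B)]).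
  move=> /existsP[x /andP[Ax Bx]]; exists x; first by rewrite in_symdiff Ax (negPf Bx).
  by rewrite symdiff1_notin //; apply: upF FB; exact: subsetUr.
move=> /existsPn subAB.
have {}subAB : A \subset B.
  by apply/subsetP=> y Ay; have := subAB y; rewrite Ay negbK.
have [x Bx Ax] : exists2 x, x \in B & x \notin A.
  by apply/subsetPn; rewrite eqEsubset subAB in neqAB.
exists x; first by rewrite in_symdiff (negPf Ax) Bx.
rewrite symdiff1_mem //; apply: upF FA; apply/subsetP=> y Ay.
by rewrite !inE (subsetP subAB y Ay) andbT; apply: contraNneq Ax => <-.
Qed.

Section SdHomomorphism.
Variables (T T' : finType) (F : pred {set T}) (F' : pred {set T'}).
Hypothesis upF : upward_closed F.

Lemma sd_hom_dist_le (f : {S | F S} -> {S | F' S}) :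
  {homo f : a b / sd_rel a b} ->
  forall a b, #|symdiff (val (f a)) (val (f b))| <= #|symdiff (val a) (val b)|.
Proof.
move=> homf a b; have [n] := ubnP #|symdiff (val a) (val b)|.
elim: n b => // n IH b ltab.
have [<-|neqab] := eqVneq a b; first by rewrite symdiffvv cards0.
have neqAB : val a != val b by rewrite val_eqE.
have [x xab FC] := upward_closed_step upF (valP a) (valP b) neqAB.
pose c : {S | F S} := exist _ (symdiff (val b) [set x]) FC.
have adj_cb : sd_rel c b by rewrite /sd_rel /= [symdiff (val b) _]symdiffC symdiffKr cards1.
have dist_ac : #|symdiff (val a) (val c)| = #|symdiff (val a) (val b)|.-1.
  by rewrite symdiffA card_symdiff1 xab.
have pos_ab : 0 < #|symdiff (val a) (val b)| by apply/card_gt0P; exists x.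
apply: leq_trans (card_symdiff_le _ (val (f c)) _) _.
by have := IH c; rewrite (eqP (homf _ _ adj_cb)) dist_ac; lia.
Qed.
End SdHomomorphism.

Lemma if_pred_succ_inj (b c : bool) n :
  (if b then n.-1 else n.+1) = (if c then n.-1 else n.+1) -> b = c.
Proof. by case: b; case: c => //= ?; lia. Qed.

Section SdIsomorphism.
Variables (T T' : finType) (F : pred {set T}) (F' : pred {set T'}).
Hypotheses (upF : upward_closed F) (upF' : upward_closed F').
Variable f : {S | F S} -> {S | F' S}.
Hypothesis f_iso : graph_iso (@sd_rel T F) (@sd_rel T' F') f.

Lemma sd_iso_dist a b : #|symdiff (val (f a)) (val (f b))| = #|symdiff (val a) (val b)|.
Proof.
have [[g fK gK] f_adj] := f_iso.
apply/eqP; rewrite eqn_leq sd_hom_dist_le //; last by move=> ? ?; rewrite f_adj.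
have g_hom : {homo g : a' b' / sd_rel a' b'} by move=> ? ?; rewrite -f_adj !gK.
by have := sd_hom_dist_le upF' g_hom (f a) (f b); rewrite !fK.
Qed.

Hypotheses (FT : F setT) (FTD1 : forall i, F (setT :\ i)).
Variable t0 : T'.

Let top : {S | F S} := exist _ setT FT.
Let coatom i : {S | F S} := exist _ (setT :\ i) (FTD1 i).
Let W := val (f top).
Let relabel i := odflt t0 [pick j in symdiff (val (f (coatom i))) W].

Lemma symdiff_coatom i : symdiff (val (f (coatom i))) W = [set relabel i].
Proof.
have : sd_rel (f (coatom i)) (f top).
  by rewrite f_iso.2 /sd_rel /= setTD1_symdiff [symdiff setT _]symdiffC symdiffKr cards1.
move/cards1P=> [j sdj]; rewrite /relabel -/W sdj.
by case: pickP => [k|/(_ j)]; rewrite inE ?eqxx // => /eqP ->.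
Qed.

Lemma val_f_coatom i : val (f (coatom i)) = symdiff W [set relabel i].
Proof. by rewrite -symdiff_coatom symdiffC symdiffKr. Qed.

Lemma relabel_inj : injective relabel.
Proof.
move=> i i' eq_rel; have [[g fK _] _] := f_iso.
have /(congr1 g) : f (coatom i) = f (coatom i').
  by apply: val_inj; rewrite !val_f_coatom eq_rel.
rewrite !fK => /(congr1 (fun s : {S | F S} => i \in val s)).
by rewrite /= !inE eqxx /=; case: eqP.
Qed.

Lemma mem_relabel s i :
  (relabel i \in val (f s)) = (i \in val s) (+) (relabel i \notin W).
Proof.
have := sd_iso_dist s (coatom i).
rewrite val_f_coatom /= setTD1_symdiff !symdiffA !card_symdiff1.
rewrite [#|symdiff _ W|](sd_iso_dist s top) => /if_pred_succ_inj.
rewrite !in_symdiff !inE.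
by case: (relabel i \in _); case: (i \in _); case: (relabel i \in W).
Qed.

Lemma relabel_transfer : #|T'| <= #|T| -> forall S, F S = F' (relabel @: S).
Proof.
move=> leT'T; have [g relK gK] := inj_card_bij relabel_inj leT'T.
move=> S; apply/idP/idP=> [FS|FS'].
  pose S1 := S :|: [set i | relabel i \notin W].
  pose s : {S | F S} := exist _ S1 (upF (subsetUl _ _) FS).
  apply: upF' (valP (f s)); apply/subsetP=> y; rewrite -(gK y) mem_relabel /= !inE.
  case: (relabel (g y) \in W) => /=; last by rewrite orbT.
  by rewrite orbF addbF; apply: imset_f.
have [[h fK hK] _] := f_iso.
pose S1' := relabel @: S :|: ~: W.
pose s' : {S | F' S} := exist _ S1' (upF' (subsetUl _ _) FS').
apply: upF (valP (h s')); apply/subsetP=> i si.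
have := mem_relabel (h s') i; rewrite hK si /= !inE.
case: (relabel i \in W) => /=; last by rewrite orbT.
by rewrite orbF => /imsetP[j jS /relabel_inj ->].
Qed.

Lemma sd_iso_relabel : exists pi : T -> T', injective pi /\
  (#|T'| <= #|T| -> forall S, F S = F' (pi @: S)).
Proof. by exists relabel; split; [exact: relabel_inj | exact: relabel_transfer]. Qed.

End SdIsomorphism.

Lemma super_param_up (X : set_param) (T : finType) (e : rel T) :
  super_param X -> is_graph e -> upward_closed (X T e).
Proof. by move=> [_ _ up]; exact: up. Qed.

Lemma super_param_setT (X : set_param) (T : finType) (e : rel T) :
  super_param X -> is_graph e -> X T e setT.
Proof.
move=> superX ge; have [_ ex _] := superX; have [S XS] := ex T e ge.
exact: super_param_up superX ge _ _ (subsetT S) XS.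
Qed.

Lemma super_param_set0 (X : set_param) (U : finType) (r : rel U) :
  super_param X -> param_value X K1_rel 0 -> is_graph r -> #|U| <= 1 -> X U r set0.
Proof.
move=> [isoinv _ _] [[S [XS /cards0_eq S0]] _] gr /card_le1_eqP U1; subst S.
have [_ irr /card_gt0P[u _]] := gr.
have K1_graph : is_graph K1_rel by split=> //; rewrite card_unit.
have iso : graph_iso K1_rel r (fun _ => u).
  split; last by move=> ? ?; rewrite irr.
  by exists (fun _ => tt) => [[]|v] //; rewrite (U1 u v).
by have := isoinv _ _ _ _ _ K1_graph gr iso set0 XS; rewrite imset0.
Qed.

Section Components.
Variables (T : finType) (e : rel T) (x : T).

Lemma comp_graph : is_graph e -> is_graph (@comp_rel T e x).
Proof.
move=> [sym_e irr _]; split=> [u v|u|]; [exact: sym_e | exact: irr |].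
by apply/card_gt0P; exists (exist _ x (connect0 e x)).
Qed.

Lemma comp_connected : symmetric e -> connected_graph (@comp_rel T e x).
Proof.
move=> sym_e; pose x0 : comp_type e x := exist _ x (connect0 e x).
have lift_path p a : path e a p -> connect e x a ->
    connect (@comp_rel T e x) (insubd x0 a) (insubd x0 (last a p)).
  elim: p a => [|b p IH] a /=; first by rewrite connect0.
  case/andP=> ab pb xa; have xb : connect e x b := connect_trans xa (connect1 ab).
  apply: connect_trans (IH b pb xb); apply: connect1.
  by rewrite /comp_rel !insubdK.
have from_x0 u : connect (@comp_rel T e x) x0 u.
  have /connectP[p px ulast] := valP u.
  have := lift_path p x px (connect0 e x); rewrite -ulast valKd.
  by have -> : insubd x0 x = x0 := valKd x0 x0.
have sym_c : symmetric (@comp_rel T e x) by move=> ? ?; exact: sym_e.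
by move=> u v; apply: connect_trans (from_x0 v); rewrite (sym_connect_sym sym_c).
Qed.

Lemma comp_card_gt1 : irreflexive e -> no_isolated e -> 1 < #|comp_type e x|.
Proof.
move=> irr /(_ x)[y xy]; apply/card_gt1P.
exists (exist _ x (connect0 e x)), (exist _ y (connect1 xy)); split=> //.
by rewrite -val_eqE /=; apply: contraTneq xy => <-; rewrite irr.
Qed.

End Components.

Lemma robust_param_setTD1 (X : set_param) (T : finType) (e : rel T) :
  robust_param X -> is_graph e -> (param_value X K1_rel 0 \/ no_isolated e) ->
  forall i, X T e (setT :\ i).
Proof.
move=> [superX n1X compX] ge K1_or_noiso i; have [sym_e irr _] := ge.
apply/(compX _ _ ge) => x; have gC := comp_graph x ge.
have [xi|nxi] := boolP (connect e x i); last first.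
  suff -> : comp_trace e x (setT :\ i) = setT by exact: super_param_setT.
  by apply/setP=> u; rewrite !inE andbT; apply: contraNneq nxi => <-; exact: valP u.
pose ui : comp_type e x := exist _ i xi.
have -> : comp_trace e x (setT :\ i) = setT :\ ui.
  by apply/setP=> u; rewrite !inE -val_eqE.
have card_ui : #|setT :\ ui| = #|comp_type e x| - 1.
  by have := cardsD1 ui setT; rewrite cardsT in_setT; lia.
have [ge2|lt2] := leqP 2 #|comp_type e x|.
  by apply: n1X => //; exact: comp_connected sym_e.
have -> : setT :\ ui = set0 by apply/cards0_eq; rewrite card_ui; lia.
case: K1_or_noiso => [K1|noiso]; first by apply: super_param_set0; rewrite // -ltnS.
by have := comp_card_gt1 x irr noiso; rewrite ltnNge -ltnS lt2.
Qed.

Theorem theorem2p12 (X : set_param) (T T' : finType) (e : rel T) (e' : rel T') :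
  robust_param X -> is_graph e -> is_graph e' ->
  tar_isomorphic X e e' ->
  (param_value X K1_rel 0 \/ (no_isolated e /\ no_isolated e')) ->
  #|T| = #|T'| /\
  exists psi : T -> T', bijective psi /\
    forall S : {set T}, X T e S = X T' e' (psi @: S).
Proof.
move=> robustX ge ge' [f f_iso] K1_or_noiso; have [superX _ _] := robustX.
have [[g fK gK] f_adj] := f_iso.
have g_iso : graph_iso (@tar_rel X T' e') (@tar_rel X T e) g.
  by split; [exists f | move=> a b; rewrite -f_adj !gK].
have XTD1 : forall i, X T e (setT :\ i).
  by apply: robust_param_setTD1 => //; case: K1_or_noiso => [|[]]; auto.
have XTD1' : forall i, X T' e' (setT :\ i).
  by apply: robust_param_setTD1 => //; case: K1_or_noiso => [|[]]; auto.
have [_ _ /card_gt0P[t _]] := ge; have [_ _ /card_gt0P[t' _]] := ge'.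
have up := super_param_up superX ge; have up' := super_param_up superX ge'.
have [pi [pi_inj pi_transfer]] :=
  sd_iso_relabel up up' f_iso (super_param_setT superX ge) XTD1 t'.
have [rho [rho_inj _]] :=
  sd_iso_relabel up' up g_iso (super_param_setT superX ge') XTD1' t.
have leT'T := leq_card rho rho_inj.
split; first by apply/eqP; rewrite eqn_leq leT'T (leq_card pi pi_inj).
by exists pi; split; [exact: inj_card_bij pi_inj leT'T | exact: pi_transfer].
Qed.
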